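(* There exist a residual subset $P_0\subseteq\mathbb{T}$ and a subset $G\subseteq\mathbb{T}$ of full Lebesgue measure such that for every $\alpha\in P_0$ and every $\beta\in G$, the sequence $\{\alpha n^3+\beta n^2\}_{n\ge0}$ in $\mathbb{T}$ has the repetition property.
   Context: $\mathbb{T}=\mathbb{R}/\mathbb{Z}$ with metric $\mathrm{dist}(x,y)=\langle x-y\rangle$, where $\langle\tau\rangle=\min\{|\hat\tau-p|:p\in\mathbb{Z}\}$ for any representative $\hat\tau\in\mathbb{R}$ of $\tau$; for $\alpha,\beta\in\mathbb{T}$ and integer $n$, $\alpha n^3+\beta n^2$ is a well-defined element of $\mathbb{T}$. $\mathbb{Z}_+=\{1,2,\ldots\}$. A sequence $\{\omega_n\}_{n\ge0}$ in a metric space $\Omega$ has the repetition property if for every $\varepsilon>0$ and $r \in \mathbb{Z}_+$ there exists $q \in \mathbb{Z}_+$ such that $\mathrm{dist}(\omega_n,\omega_{n+q}) < \varepsilon$ for $n = 0,1,\ldots, rq$. *)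

From Stdlib Require Import Reals.
Open Scope R_scope.

(* The torus T = R/Z is represented through real representatives.
   <tau> = distance from tau to the nearest integer
         = min(frac tau, 1 - frac tau). *)
Definition tnorm (x : R) : R := Rmin (frac_part x) (1 - frac_part x).

Definition tdist (x y : R) : R := tnorm (x - y).

(* A subset of T, given by its (Z-periodic) preimage in R. *)
Definition periodic (A : R -> Prop) : Prop :=
  forall x, A x <-> A (x + 1).

Definition is_open (U : R -> Prop) : Prop :=
  forall x, U x -> exists d, 0 < d /\ forall y, Rabs (y - x) < d -> U y.

Definition is_dense (U : R -> Prop) : Prop :=
  forall x d, 0 < d -> exists y, U y /\ Rabs (y - x) < d.

(* residual = contains a countable intersection of dense open sets.
   For a periodic set this is equivalent to being residual in T. *)
Definition residual (A : R -> Prop) : Prop :=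
  exists U : nat -> R -> Prop,
    (forall k, is_open (U k)) /\ (forall k, is_dense (U k)) /\
    (forall x, (forall k, U k x) -> A x).

Definition lebesgue_null (N : R -> Prop) : Prop :=
  forall eps, 0 < eps ->
    exists a b : nat -> R,
      (forall k, a k <= b k) /\
      (forall x, N x -> exists k, a k < x < b k) /\
      (forall m, sum_f_R0 (fun k => b k - a k) m <= eps).

Definition full_measure (A : R -> Prop) : Prop :=
  lebesgue_null (fun x => ~ A x).

Definition repetition_property (w : nat -> R) : Prop :=
  forall eps, 0 < eps -> forall r : nat, (1 <= r)%nat ->
    exists q : nat, (1 <= q)%nat /\
      forall n : nat, (n <= r * q)%nat -> tdist (w n) (w (n + q)%nat) < eps.

Definition cubic_seq (alpha beta : R) (n : nat) : R :=
  alpha * (INR n) ^ 3 + beta * (INR n) ^ 2.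

(* With [q = k s] one has
   [w (n + q) - w n = s (3n^2 + 3nq + q^2) (k alpha) + (2n + q) s (k beta)],
   so for [n <= k q] the sequence repeats up to [1/k] as soon as [k alpha] is within a
   polynomially small tolerance of an integer and [s |s k beta| < 1/(6 k^3)] for some
   [s <= M_k]. The first condition, for infinitely many [k], defines a dense G_delta set
   of [alpha]. The second holds for all large [k] for almost every [beta]: the points of
   [[0,1]] with [s |s x| >= c] for all [s <= M] have measure tending to [0] with [M], by a
   Stern-Brocot recursion. On a Farey interval [[u1/v1, u2/v2]] with [v1 <= v2] and
   [J c >= 1], the points between [u1/v1] and the mediant [(J u1 + u2)/(J v1 + v2)] have
   the good denominator [v1], and the [J] Farey intervals cut off by the earlier mediants
   have total length at most [J/(J+1)] times that of the whole. A Borel-Cantelli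
   summation over [k] finishes. *)
From Stdlib Require Import Reals Lra Lia List Classical ClassicalEpsilon ZArith.
Open Scope R_scope.

Lemma INR_ge1 (n : nat) : (1 <= n)%nat -> 1 <= INR n.
Proof. intro H. apply le_INR in H. exact H. Qed.

Lemma nat_gt (x : R) : exists n : nat, x < INR n.
Proof.
  destruct (INR_archimed 1 x) as [n Hn]; [lra|].
  exists n. lra.
Qed.

Lemma one_div_lt_swap (d x : R) : 0 < d -> 1 / d < x -> 1 / x < d.
Proof.
  intros Hd Hx. assert (Hx0 : 0 < x) by (pose proof (Rdiv_lt_0_compat 1 d ltac:(lra) Hd); lra).
  apply (Rmult_lt_reg_r x); [auto|]. replace (1 / x * x) with 1 by (field; lra).
  apply (Rmult_lt_compat_l d) in Hx; [|auto]. replace (d * (1 / d)) with 1 in Hx by (field; lra).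
  lra.
Qed.

Lemma Rdiv_nonneg (a b : R) : 0 <= a -> 0 < b -> 0 <= a / b.
Proof. intros. apply Rmult_le_pos; [|left; apply Rinv_0_lt_compat]; auto. Qed.

Lemma tnorm_le_dist_int (x : R) (z : Z) : tnorm x <= Rabs (x - IZR z).
Proof.
  unfold tnorm, frac_part.
  destruct (base_Int_part x) as [H1 H2].
  destruct (Z.le_gt_cases z (Int_part x)) as [Hz|Hz].
  - apply IZR_le in Hz.
    apply Rle_trans with (x - IZR (Int_part x)); [apply Rmin_l|].
    rewrite Rabs_right; lra.
  - assert (Hz' : (Int_part x + 1 <= z)%Z) by lia.
    apply IZR_le in Hz'. rewrite plus_IZR in Hz'.
    apply Rle_trans with (1 - (x - IZR (Int_part x))); [apply Rmin_r|].
    rewrite Rabs_left1; lra.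
Qed.

Lemma tnorm_attained (x : R) : exists z : Z, tnorm x = Rabs (x - IZR z).
Proof.
  unfold tnorm, frac_part.
  destruct (base_Int_part x) as [H1 H2].
  apply Rmin_case.
  - exists (Int_part x). rewrite Rabs_right; lra.
  - exists (Int_part x + 1)%Z. rewrite plus_IZR, Rabs_left1; lra.
Qed.

Lemma tnorm_ge0 (x : R) : 0 <= tnorm x.
Proof. destruct (tnorm_attained x) as [z ->]. apply Rabs_pos. Qed.

Lemma tnorm_lipschitz (x y : R) : tnorm x <= tnorm y + Rabs (x - y).
Proof.
  destruct (tnorm_attained y) as [z Hz].
  apply Rle_trans with (Rabs (x - IZR z)); [apply tnorm_le_dist_int|].
  rewrite Hz. replace (x - IZR z) with ((x - y) + (y - IZR z)) by ring.
  pose proof (Rabs_triang (x - y) (y - IZR z)). lra.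
Qed.

Lemma tnorm_add (x y : R) : tnorm (x + y) <= tnorm x + tnorm y.
Proof.
  destruct (tnorm_attained x) as [a Ha], (tnorm_attained y) as [b Hb].
  apply Rle_trans with (Rabs (x + y - IZR (a + b))); [apply tnorm_le_dist_int|].
  rewrite plus_IZR, Ha, Hb.
  replace (x + y - (IZR a + IZR b)) with ((x - IZR a) + (y - IZR b)) by ring.
  apply Rabs_triang.
Qed.

Lemma tnorm_opp (x : R) : tnorm (- x) = tnorm x.
Proof.
  assert (Hle : forall y, tnorm (- y) <= tnorm y).
  { intro y. destruct (tnorm_attained y) as [a Ha].
    apply Rle_trans with (Rabs (- y - IZR (- a))); [apply tnorm_le_dist_int|].
    rewrite opp_IZR, Ha, <- Rabs_Ropp. right. f_equal. ring. }
  apply Rle_antisym; auto.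
  rewrite <- (Ropp_involutive x) at 1. auto.
Qed.

Lemma tnorm_int (z : Z) : tnorm (IZR z) = 0.
Proof.
  apply Rle_antisym; [|apply tnorm_ge0].
  pose proof (tnorm_le_dist_int (IZR z) z). rewrite Rminus_diag, Rabs_R0 in H. exact H.
Qed.

Lemma tnorm_add_int (x : R) (z : Z) : tnorm (x + IZR z) = tnorm x.
Proof.
  apply Rle_antisym.
  - pose proof (tnorm_add x (IZR z)). rewrite tnorm_int in H. lra.
  - pose proof (tnorm_add (x + IZR z) (IZR (- z))).
    rewrite tnorm_int, opp_IZR in H. replace (x + IZR z + - IZR z) with x in H by ring. lra.
Qed.

Lemma tnorm_mul_nat (x : R) (n : nat) : tnorm (INR n * x) <= INR n * tnorm x.
Proof.
  induction n.
  - rewrite Rmult_0_l, (tnorm_int 0). simpl. lra.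
  - rewrite S_INR. replace ((INR n + 1) * x) with (INR n * x + x) by ring.
    pose proof (tnorm_add (INR n * x) x). lra.
Qed.

Lemma mul_nat_add_int (x : R) (k : nat) (z : Z) :
  INR k * (x + IZR z) = INR k * x + IZR (Z.of_nat k * z).
Proof. rewrite mult_IZR, <- INR_IZR_INZ. ring. Qed.

(* [good_denom c M x]: some denominator [s <= M] approximates [x] to order
   [c / s^2], i.e. [|x - p/s| < c / s^2] for an integer [p]. *)
Definition good_denom (c : R) (M : nat) (x : R) : Prop :=
  exists s : nat, (1 <= s <= M)%nat /\ INR s * tnorm (INR s * x) < c.

Lemma good_denom_mono (c : R) (M M' : nat) (x : R) :
  (M <= M')%nat -> good_denom c M x -> good_denom c M' x.
Proof. intros H [s [Hs Hs']]. exists s. split; [lia|auto]. Qed.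

Lemma good_denom_add_int (c : R) (M : nat) (x : R) (z : Z) :
  good_denom c M (x + IZR z) <-> good_denom c M x.
Proof.
  split; intros [s [Hs Hs']]; exists s; split; auto.
  - rewrite mul_nat_add_int, tnorm_add_int in Hs'. auto.
  - rewrite mul_nat_add_int, tnorm_add_int. auto.
Qed.
Definition covers (L : list (R * R)) (x : R) : Prop :=
  exists p, In p L /\ fst p < x < snd p.

Definition total_length (L : list (R * R)) : R :=
  fold_right (fun p acc => snd p - fst p + acc) 0 L.

Definition nondegenerate (L : list (R * R)) : Prop :=
  forall p, In p L -> fst p <= snd p.

Lemma total_length_app (L L' : list (R * R)) :
  total_length (L ++ L') = total_length L + total_length L'.
Proof. induction L; simpl; [ring|]. rewrite IHL; ring. Qed.

Lemma total_length_nonneg (L : list (R * R)) : nondegenerate L -> 0 <= total_length L.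
Proof.
  induction L as [|p L IH]; simpl; intros H; [lra|].
  assert (fst p <= snd p) by (apply H; left; auto).
  assert (0 <= total_length L) by (apply IH; intros q Hq; apply H; right; auto). lra.
Qed.

Lemma nondegenerate_app (L L' : list (R * R)) :
  nondegenerate L -> nondegenerate L' -> nondegenerate (L ++ L').
Proof. intros H H' p Hp. apply in_app_or in Hp. destruct Hp; auto. Qed.

Lemma covers_app_l (L L' : list (R * R)) (x : R) : covers L x -> covers (L ++ L') x.
Proof. intros [p [H1 H2]]. exists p. split; auto. apply in_or_app; auto. Qed.

Lemma covers_app_r (L L' : list (R * R)) (x : R) : covers L' x -> covers (L ++ L') x.
Proof. intros [p [H1 H2]]. exists p. split; auto. apply in_or_app; auto. Qed.

Definition between (a b x : R) : Prop := (a <= x <= b) \/ (b <= x <= a).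

Lemma between_split (a m b x : R) :
  between a b m -> between a b x -> between a m x \/ between m b x.
Proof. unfold between. lra. Qed.

Lemma between_dist (a b x : R) : between a b x -> Rabs (x - a) <= Rabs (a - b).
Proof.
  unfold between, Rabs. intro H. destruct (Rcase_abs (x - a)), (Rcase_abs (a - b)); lra.
Qed.

Definition fraction (u : Z) (v : nat) : R := IZR u / INR v.

Definition farey_pair (u1 : Z) (v1 : nat) (u2 : Z) (v2 : nat) : Prop :=
  (1 <= v1)%nat /\ (1 <= v2)%nat /\ Rabs (IZR u1 * INR v2 - IZR u2 * INR v1) = 1.

Lemma farey_pair_sym (u1 : Z) (v1 : nat) (u2 : Z) (v2 : nat) :
  farey_pair u1 v1 u2 v2 -> farey_pair u2 v2 u1 v1.
Proof.
  intros [H1 [H2 H3]]. split; [auto|split; [auto|]].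
  etransitivity; [|exact H3]. rewrite <- Rabs_Ropp. f_equal. ring.
Qed.

Lemma farey_pair_dist (u1 : Z) (v1 : nat) (u2 : Z) (v2 : nat) :
  farey_pair u1 v1 u2 v2 ->
  Rabs (fraction u1 v1 - fraction u2 v2) = 1 / (INR v1 * INR v2).
Proof.
  intros [H1 [H2 H3]]. apply INR_ge1 in H1. apply INR_ge1 in H2. unfold fraction.
  replace (IZR u1 / INR v1 - IZR u2 / INR v2) with
    ((IZR u1 * INR v2 - IZR u2 * INR v1) * / (INR v1 * INR v2)) by (field; lra).
  rewrite Rabs_mult, H3, Rabs_inv, Rabs_right; [field; lra|].
  apply Rle_ge. apply Rmult_le_pos; lra.
Qed.

Lemma farey_pair_iter (u1 : Z) (v1 : nat) (u : Z) (v i : nat) :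
  farey_pair u1 v1 u v -> farey_pair u1 v1 (Z.of_nat i * u1 + u) (i * v1 + v).
Proof.
  intros [H1 [H2 H3]]. split; [auto|split; [lia|]].
  rewrite plus_IZR, mult_IZR, <- INR_IZR_INZ, plus_INR, mult_INR.
  etransitivity; [|exact H3]. f_equal. ring.
Qed.

Lemma farey_pair_iter_succ (u1 : Z) (v1 : nat) (u : Z) (v i : nat) :
  farey_pair u1 v1 u v ->
  farey_pair (Z.of_nat (S i) * u1 + u) (S i * v1 + v) (Z.of_nat i * u1 + u) (i * v1 + v).
Proof.
  intros [H1 [H2 H3]]. split; [lia|split; [lia|]].
  rewrite !plus_IZR, !mult_IZR, <- !INR_IZR_INZ, !plus_INR, !mult_INR, S_INR.
  etransitivity; [|exact H3]. f_equal. ring.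
Qed.

Lemma mediant_between (u1 : Z) (v1 : nat) (u : Z) (v : nat) :
  (1 <= v1)%nat -> (1 <= v)%nat ->
  between (fraction u1 v1) (fraction u v) (fraction (u1 + u) (v1 + v)).
Proof.
  intros H1 H2. apply INR_ge1 in H1. apply INR_ge1 in H2. unfold fraction, between.
  rewrite plus_IZR, plus_INR.
  set (a := IZR u1) in *. set (b := INR v1) in *. set (c := IZR u) in *. set (d := INR v) in *.
  assert (E1 : (a + c) / (b + d) - a / b = (b * c - a * d) / (b * (b + d))) by (field; lra).
  assert (E2 : c / d - (a + c) / (b + d) = (b * c - a * d) / (d * (b + d))) by (field; lra).
  assert (P1 : 0 < b * (b + d)) by nra.
  assert (P2 : 0 < d * (b + d)) by nra.
  destruct (Rle_dec 0 (b * c - a * d)).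
  - left. pose proof (Rdiv_nonneg _ _ r P1). pose proof (Rdiv_nonneg _ _ r P2). lra.
  - right.
    assert (Hn : 0 <= a * d - b * c) by lra.
    pose proof (Rdiv_nonneg _ _ Hn P1). pose proof (Rdiv_nonneg _ _ Hn P2).
    replace ((b * c - a * d) / (b * (b + d))) with (- ((a * d - b * c) / (b * (b + d)))) in E1
      by (field; lra).
    replace ((b * c - a * d) / (d * (b + d))) with (- ((a * d - b * c) / (d * (b + d)))) in E2
      by (field; lra).
    lra.
Qed.

Definition shrink (J : nat) : R := INR J / (INR J + 1).

Lemma shrink_ge0 (J : nat) : 0 <= shrink J.
Proof. apply Rdiv_nonneg; pose proof (pos_INR J); lra. Qed.

(* Depth [d] of the Stern-Brocot recursion: on a Farey interval (of length
   [1 / (v1 v2)]) the points without a good denominator are covered by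
   intervals of total length [shrink J ^ d] times that length. *)
Definition farey_cover (c : R) (J d : nat) : Prop :=
  forall u1 v1 u2 v2, farey_pair u1 v1 u2 v2 ->
  exists L, nondegenerate L /\
    total_length L <= shrink J ^ d / (INR v1 * INR v2) /\
    forall x, between (fraction u1 v1) (fraction u2 v2) x ->
      covers L x \/ good_denom c ((J + 1) ^ d * Nat.max v1 v2) x.

Lemma farey_cover_0 (c : R) (J : nat) : 0 < c -> farey_cover c J 0.
Proof.
  intros Hc u1 v1 u2 v2 Hu.
  set (a := fraction u1 v1). set (b := fraction u2 v2).
  assert (Hgood : forall u v, (1 <= v)%nat -> good_denom c (Nat.max v1 v2) (fraction u v) ->
                              good_denom c ((J + 1) ^ 0 * Nat.max v1 v2) (fraction u v)).
  { intros. simpl. rewrite Nat.add_0_r. auto. }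
  assert (Hend : forall u v, (1 <= v <= Nat.max v1 v2)%nat ->
                 good_denom c (Nat.max v1 v2) (fraction u v)).
  { intros u v Hv. exists v. split; auto. unfold fraction.
    assert (1 <= INR v) by (apply INR_ge1; lia).
    replace (INR v * (IZR u / INR v)) with (IZR u) by (field; lra).
    rewrite tnorm_int. lra. }
  exists ((Rmin a b, Rmax a b) :: nil). split; [|split].
  - intros p [<-|[]]. simpl. unfold Rmin, Rmax; destruct (Rle_dec a b); lra.
  - simpl. rewrite <- (farey_pair_dist _ _ _ _ Hu). fold a b.
    unfold Rmin, Rmax, Rabs. destruct (Rle_dec a b), (Rcase_abs (a - b)); lra.
  - intros x Hx. destruct Hu as [H1 [H2 _]].
    destruct (Req_dec x a) as [->|Ea]; [right; apply Hgood, Hend; lia|].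
    destruct (Req_dec x b) as [->|Eb]; [right; apply Hgood, Hend; lia|].
    left. exists (Rmin a b, Rmax a b). split; [left; reflexivity|]. simpl.
    unfold between, Rmin, Rmax in *. destruct (Rle_dec a b); lra.
Qed.

(* Splitting [u1/v1, u/v] at the successive mediants [(i u1 + u)/(i v1 + v)]
   and applying depth [d] to each piece [i+1, i]. *)
Lemma farey_cover_fan (c : R) (J d : nat) (u1 : Z) (v1 : nat) :
  farey_cover c J d -> forall i u v, farey_pair u1 v1 u v ->
  exists L, nondegenerate L /\
    total_length L <=
      shrink J ^ d * (1 / (INR v1 * INR v) - 1 / (INR v1 * INR (i * v1 + v))) /\
    forall x, between (fraction u1 v1) (fraction u v) x ->
      between (fraction u1 v1) (fraction (Z.of_nat i * u1 + u) (i * v1 + v)) x \/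
      covers L x \/ good_denom c ((J + 1) ^ d * (i * v1 + v)) x.
Proof.
  intros IH. induction i; intros u v Hu.
  - exists nil. split; [intros p []|]. split.
    + simpl. rewrite Rminus_diag, Rmult_0_r. lra.
    + intros x Hx. left. exact Hx.
  - destruct (IHi u v Hu) as [L [HLo [HLs HLc]]].
    destruct (IH _ _ _ _ (farey_pair_iter_succ u1 v1 u v i Hu)) as [L' [HLo' [HLs' HLc']]].
    assert (Hv := Hu). destruct Hv as [H1 [H2 _]].
    exists (L ++ L'). split; [apply nondegenerate_app; auto|]. split.
    + rewrite total_length_app.
      apply INR_ge1 in H1. apply INR_ge1 in H2. pose proof (pos_INR i).
      rewrite !plus_INR, !mult_INR, !S_INR in *.
      assert (E : shrink J ^ d * (1 / (INR v1 * INR v) - 1 / (INR v1 * (INR i * INR v1 + INR v)))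
        + shrink J ^ d / (((INR i + 1) * INR v1 + INR v) * (INR i * INR v1 + INR v))
        = shrink J ^ d * (1 / (INR v1 * INR v) - 1 / (INR v1 * ((INR i + 1) * INR v1 + INR v)))).
      { field. repeat split; nra. }
      lra.
    + assert (Hmono : forall x, good_denom c ((J + 1) ^ d * (i * v1 + v)) x ->
                                good_denom c ((J + 1) ^ d * (S i * v1 + v)) x).
      { intro x. apply good_denom_mono, Nat.mul_le_mono_l. lia. }
      intros x Hx. destruct (HLc x Hx) as [Hb|[Hc'|Hg]].
      * assert (Hm : between (fraction u1 v1) (fraction (Z.of_nat i * u1 + u) (i * v1 + v))
                       (fraction (Z.of_nat (S i) * u1 + u) (S i * v1 + v))).
        { replace (Z.of_nat (S i) * u1 + u)%Z with (u1 + (Z.of_nat i * u1 + u))%Z by lia.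
          replace (S i * v1 + v)%nat with (v1 + (i * v1 + v))%nat by lia.
          apply mediant_between; lia. }
        destruct (between_split _ _ _ _ Hm Hb) as [Hb'|Hb']; [left; exact Hb'|].
        assert (Hb'' : between (fraction (Z.of_nat (S i) * u1 + u) (S i * v1 + v))
                               (fraction (Z.of_nat i * u1 + u) (i * v1 + v)) x)
          by (unfold between in *; lra).
        destruct (HLc' x Hb'') as [Hc2|Hg2].
        -- right; left. apply covers_app_r; auto.
        -- right; right. eapply good_denom_mono; [|exact Hg2].
           apply Nat.mul_le_mono_l. lia.
      * right; left. apply covers_app_l; auto.
      * right; right. apply Hmono; auto.
Qed.

Lemma fan_length_le (a b j : R) :
  1 <= a <= b -> 1 <= j -> 1 / (a * b) - 1 / (a * (j * a + b)) <= j / (j + 1) / (a * b).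
Proof.
  intros Hab Hj.
  assert (E : j / (j + 1) / (a * b) - (1 / (a * b) - 1 / (a * (j * a + b)))
              = j * (b - a) / ((j + 1) * a * b * (j * a + b))) by (field; nra).
  assert (0 <= j * (b - a) / ((j + 1) * a * b * (j * a + b))).
  { apply Rdiv_nonneg; [nra|]. repeat apply Rmult_lt_0_compat; nra. }
  lra.
Qed.

Lemma good_near_endpoint (c : R) (J : nat) (u1 : Z) (v1 : nat) (u2 : Z) (v2 : nat) (x : R) :
  (1 <= J)%nat -> 1 <= INR J * c -> farey_pair u1 v1 u2 v2 ->
  between (fraction u1 v1) (fraction (Z.of_nat J * u1 + u2) (J * v1 + v2)) x ->
  INR v1 * tnorm (INR v1 * x) < c.
Proof.
  intros HJ HJc Hu Hx.
  pose proof (between_dist _ _ _ Hx) as Hd.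
  rewrite (farey_pair_dist _ _ _ _ (farey_pair_iter u1 v1 u2 v2 J Hu)), plus_INR, mult_INR in Hd.
  destruct Hu as [H1 [H2 _]].
  pose proof (INR_ge1 _ H1) as Ha. pose proof (INR_ge1 _ H2) as Hb. pose proof (INR_ge1 _ HJ) as Hj.
  pose proof (tnorm_le_dist_int (INR v1 * x) u1) as Ht.
  replace (INR v1 * x - IZR u1) with (INR v1 * (x - fraction u1 v1)) in Ht
    by (unfold fraction; field; lra).
  rewrite Rabs_mult, (Rabs_right (INR v1)) in Ht by lra.
  set (a := INR v1) in *. set (b := INR v2) in *. set (j := INR J) in *.
  assert (S1 : a * tnorm (a * x) <= a / (j * a + b)).
  { replace (a / (j * a + b)) with (a * a * (1 / (a * (j * a + b)))) by (field; nra).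
    pose proof (tnorm_ge0 (a * x)). nra. }
  assert (S2 : a / (j * a + b) < 1 / j).
  { assert (E : 1 / j - a / (j * a + b) = b / (j * (j * a + b))) by (field; nra).
    assert (0 < b / (j * (j * a + b))) by (apply Rdiv_lt_0_compat; nra).
    lra. }
  assert (S3 : 1 / j <= c).
  { apply (Rmult_le_reg_l j); [lra|]. replace (j * (1 / j)) with 1 by (field; lra). lra. }
  lra.
Qed.

Lemma pow_succ_ge1 (J n : nat) : (1 <= (J + 1) ^ n)%nat.
Proof. induction n; simpl; lia. Qed.

Lemma farey_cover_succ_le (c : R) (J d : nat) :
  (1 <= J)%nat -> 1 <= INR J * c -> farey_cover c J d ->
  forall u1 v1 u2 v2, farey_pair u1 v1 u2 v2 -> (v1 <= v2)%nat ->
  exists L, nondegenerate L /\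
    total_length L <= shrink J ^ S d / (INR v1 * INR v2) /\
    forall x, between (fraction u1 v1) (fraction u2 v2) x ->
      covers L x \/ good_denom c ((J + 1) ^ S d * Nat.max v1 v2) x.
Proof.
  intros HJ HJc IH u1 v1 u2 v2 Hu Hle.
  destruct (farey_cover_fan c J d u1 v1 IH J u2 v2 Hu) as [L [HLo [HLs HLc]]].
  assert (Hv := Hu). destruct Hv as [H1 [H2 _]].
  exists L. split; [auto|split].
  - apply (Rle_trans _ _ _ HLs).
    rewrite plus_INR, mult_INR.
    pose proof (fan_length_le (INR v1) (INR v2) (INR J)) as Hf.
    specialize (Hf ltac:(split; [apply INR_ge1|apply le_INR]; auto) (INR_ge1 _ HJ)).
    pose proof (pow_le _ d (shrink_ge0 J)).
    replace (shrink J ^ S d / (INR v1 * INR v2))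
      with (shrink J ^ d * (INR J / (INR J + 1) / (INR v1 * INR v2)))
      by (unfold shrink; simpl; field; pose proof (pos_INR J);
          pose proof (INR_ge1 _ H1); pose proof (INR_ge1 _ H2); nra).
    apply Rmult_le_compat_l; auto.
  - pose proof (pow_succ_ge1 J d).
    intros x Hx. destruct (HLc x Hx) as [Hb|[Hc|Hg]].
    + right. exists v1. split; [simpl; nia|].
      apply (good_near_endpoint c J u1 v1 u2 v2); auto.
    + left. auto.
    + right. eapply good_denom_mono; [|exact Hg].
      rewrite Nat.max_r by auto. simpl. nia.
Qed.

Lemma farey_cover_all (c : R) (J : nat) :
  0 < c -> (1 <= J)%nat -> 1 <= INR J * c -> forall d, farey_cover c J d.
Proof.
  intros Hc HJ HJc. induction d; [apply farey_cover_0; auto|].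
  intros u1 v1 u2 v2 Hu.
  destruct (Nat.le_ge_cases v1 v2) as [Hle|Hge].
  - apply farey_cover_succ_le; auto.
  - destruct (farey_cover_succ_le c J d HJ HJc IHd u2 v2 u1 v1 (farey_pair_sym _ _ _ _ Hu) Hge)
      as [L [HLo [HLs HLc]]].
    exists L. split; [auto|split].
    + rewrite Rmult_comm; auto.
    + intros x Hx. rewrite Nat.max_comm. apply HLc. unfold between in *; lra.
Qed.

Lemma bad_unit_interval_small (c eps : R) :
  0 < c -> 0 < eps -> exists (M : nat) (L : list (R * R)),
    nondegenerate L /\ total_length L <= eps /\
    forall g, 0 <= g <= 1 -> covers L g \/ good_denom c M g.
Proof.
  intros Hc Heps.
  destruct (nat_gt (1 / c)) as [J0 HJ0].
  set (J := S J0).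
  assert (HJ : (1 <= J)%nat) by (unfold J; lia).
  assert (HJc : 1 <= INR J * c).
  { unfold J. rewrite S_INR.
    apply (Rmult_lt_compat_r c) in HJ0; [|auto].
    replace (1 / c * c) with 1 in HJ0 by (field; lra). nra. }
  assert (Hth : Rabs (shrink J) < 1).
  { pose proof (shrink_ge0 J). rewrite Rabs_right by lra. unfold shrink.
    pose proof (pos_INR J). apply (Rmult_lt_reg_r (INR J + 1)); [lra|].
    unfold Rdiv. rewrite Rmult_assoc, Rinv_l; lra. }
  destruct (pow_lt_1_zero _ Hth _ Heps) as [d Hd]. specialize (Hd d (le_n d)).
  destruct (farey_cover_all c J Hc HJ HJc d 0%Z 1%nat 1%Z 1%nat) as [L [HLo [HLs HLc]]].
  { split; [lia|split; [lia|]]. simpl. rewrite Rabs_left; lra. }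
  exists ((J + 1) ^ d * Nat.max 1 1)%nat, L. split; [auto|split].
  - apply (Rle_trans _ _ _ HLs). simpl (INR 1). rewrite Rmult_1_r, Rdiv_1_r.
    pose proof (Rle_abs (shrink J ^ d)). lra.
  - intros g Hg. apply HLc. left. unfold fraction. simpl. lra.
Qed.

Lemma sum_lengths_le_total (L : list (R * R)) : nondegenerate L -> forall m,
  sum_f_R0 (fun k => snd (nth k L (0, 0)) - fst (nth k L (0, 0))) m <= total_length L.
Proof.
  induction L as [|p L IH]; intros HL m.
  - simpl. induction m; simpl; [lra|]. destruct m; simpl in *; lra.
  - assert (HL' : nondegenerate L) by (intros q Hq; apply HL; right; auto).
    assert (Hp : fst p <= snd p) by (apply HL; left; auto).
    destruct m.
    + simpl. pose proof (total_length_nonneg L HL'). lra.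
    + rewrite decomp_sum by lia. simpl. specialize (IH HL' m). simpl in IH. lra.
Qed.

(* The dummy interval in front of each [B n] makes the concatenation up to [N]
   have length at least [N + 1], so its [k]-th entry no longer changes once [N >= k]. *)
Definition concat_upto (B : nat -> list (R * R)) (N : nat) : list (R * R) :=
  concat (map (fun n => (0, 0) :: B n) (seq 0 (S N))).

Lemma concat_upto_S (B : nat -> list (R * R)) (N : nat) :
  concat_upto B (S N) = concat_upto B N ++ ((0, 0) :: B (S N)).
Proof.
  unfold concat_upto. rewrite (seq_S (S N) 0), map_app, concat_app. simpl.
  rewrite app_nil_r. auto.
Qed.

Lemma concat_upto_length (B : nat -> list (R * R)) (N : nat) :
  (S N <= length (concat_upto B N))%nat.
Proof.
  induction N; [unfold concat_upto; simpl; lia|].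
  rewrite concat_upto_S, length_app. cbn [length]. lia.
Qed.

Lemma concat_upto_prefix (B : nat -> list (R * R)) (m m' : nat) :
  (m <= m')%nat -> exists t, concat_upto B m' = concat_upto B m ++ t.
Proof.
  induction 1 as [|m' _ [t Ht]]; [exists nil; rewrite app_nil_r; auto|].
  exists (t ++ ((0, 0) :: B (S m'))). rewrite concat_upto_S, Ht, app_assoc. auto.
Qed.

Lemma concat_upto_nth (B : nat -> list (R * R)) (k N : nat) :
  (k <= N)%nat -> nth k (concat_upto B N) (0, 0) = nth k (concat_upto B k) (0, 0).
Proof.
  intro H. destruct (concat_upto_prefix B k N H) as [t ->]. apply app_nth1.
  pose proof (concat_upto_length B k). lia.
Qed.

Lemma concat_upto_total_length (B : nat -> list (R * R)) (N : nat) :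
  total_length (concat_upto B N) = sum_f_R0 (fun n => total_length (B n)) N.
Proof.
  induction N; [unfold concat_upto; simpl; rewrite app_nil_r; ring|].
  rewrite concat_upto_S, total_length_app, IHN. simpl. ring.
Qed.

Lemma concat_upto_nondegenerate (B : nat -> list (R * R)) (N : nat) :
  (forall n, nondegenerate (B n)) -> nondegenerate (concat_upto B N).
Proof.
  intros HB p. unfold concat_upto. rewrite in_concat. intros [l [Hl Hp]].
  apply in_map_iff in Hl. destruct Hl as [n [<- _]].
  destruct Hp as [<-|Hp]; [simpl; lra|]. apply (HB n); auto.
Qed.

Lemma interval_sequence_of_lists (B : nat -> list (R * R)) (eps : R) (N : R -> Prop) :
  (forall n, nondegenerate (B n)) ->
  (forall m, sum_f_R0 (fun n => total_length (B n)) m <= eps) ->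
  (forall x, N x -> exists n, covers (B n) x) ->
  exists a b : nat -> R,
    (forall k, a k <= b k) /\
    (forall x, N x -> exists k, a k < x < b k) /\
    (forall m, sum_f_R0 (fun k => b k - a k) m <= eps).
Proof.
  intros Hnd Hsum Hcov.
  set (I k := nth k (concat_upto B k) (0, 0)).
  exists (fun k => fst (I k)), (fun k => snd (I k)). split; [|split].
  - intro k. apply (concat_upto_nondegenerate B k Hnd). apply nth_In.
    pose proof (concat_upto_length B k). lia.
  - intros x Hx. destruct (Hcov x Hx) as [n [p [Hp Hpx]]].
    assert (HpC : In p (concat_upto B n)).
    { unfold concat_upto. apply in_concat. exists ((0, 0) :: B n). split; [|right; auto].
      apply (in_map (fun n => (0, 0) :: B n)). apply in_seq. lia. }
    destruct (In_nth (concat_upto B n) p (0, 0) HpC) as [k [Hk Hnth]].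
    exists k. replace (I k) with p; auto. unfold I.
    destruct (Nat.le_gt_cases k n).
    + rewrite <- (concat_upto_nth B k n); auto.
    + destruct (concat_upto_prefix B n k ltac:(lia)) as [t ->]. rewrite app_nth1; auto.
  - intro m. eapply Rle_trans; [|apply (Hsum m)]. rewrite <- concat_upto_total_length.
    rewrite (sum_eq _ (fun k => snd (nth k (concat_upto B m) (0, 0))
                               - fst (nth k (concat_upto B m) (0, 0)))).
    + apply sum_lengths_le_total, concat_upto_nondegenerate, Hnd.
    + intros i Hi. unfold I. rewrite (concat_upto_nth B i m Hi). auto.
Qed.

Definition beta_tol (k : nat) : R := 1 / (6 * INR k ^ 3).

Definition unit_cover_budget (k : nat) : R := (1 / 2) ^ k / (2 * INR k + 1).

Definition unit_cover_spec (k : nat) (ML : nat * list (R * R)) : Prop :=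
  nondegenerate (snd ML) /\ total_length (snd ML) <= unit_cover_budget k /\
  forall g, 0 <= g <= 1 -> covers (snd ML) g \/ good_denom (beta_tol k) (fst ML) g.

Definition unit_cover (k : nat) : nat * list (R * R) :=
  epsilon (inhabits (0%nat, nil)) (unit_cover_spec k).

Definition denom_bound (k : nat) : nat := fst (unit_cover k).

Definition bad_cover (k : nat) : list (R * R) := snd (unit_cover k).

Lemma unit_cover_correct (k : nat) : (1 <= k)%nat -> unit_cover_spec k (unit_cover k).
Proof.
  intro Hk. apply INR_ge1 in Hk. unfold unit_cover. apply epsilon_spec.
  destruct (bad_unit_interval_small (beta_tol k) (unit_cover_budget k)) as [M [L HL]].
  - apply Rdiv_lt_0_compat; [lra|]. pose proof (pow_lt (INR k) 3 ltac:(lra)). lra.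
  - apply Rdiv_lt_0_compat; [apply pow_lt|]; lra.
  - exists (M, L). exact HL.
Qed.

Definition G_set (b : R) : Prop :=
  exists K : nat, forall k : nat, (K <= k)%nat -> (1 <= k)%nat ->
    good_denom (beta_tol k) (denom_bound k) (INR k * b).

Lemma G_set_periodic : periodic G_set.
Proof.
  intro x. split; intros [K HK]; exists K; intros k H1 H2; specialize (HK k H1 H2).
  - rewrite (mul_nat_add_int x k 1). apply good_denom_add_int. auto.
  - rewrite (mul_nat_add_int x k 1) in HK. apply good_denom_add_int in HK. auto.
Qed.

Definition preimage_interval (t k : R) (p : R * R) : R * R :=
  ((fst p + t) / k, (snd p + t) / k).

Lemma total_length_preimage (L : list (R * R)) (t k : R) :
  k <> 0 -> total_length (map (preimage_interval t k) L) = total_length L / k.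
Proof.
  intro Hk. induction L; simpl; [field; auto|].
  rewrite IHL. unfold preimage_interval; simpl. field. auto.
Qed.

Lemma nondegenerate_preimage (L : list (R * R)) (t k : R) :
  0 < k -> nondegenerate L -> nondegenerate (map (preimage_interval t k) L).
Proof.
  intros Hk HL p Hp. apply in_map_iff in Hp. destruct Hp as [q [<- Hq]].
  apply HL in Hq. unfold preimage_interval; simpl.
  apply Rmult_le_compat_r; [left; apply Rinv_0_lt_compat; auto|lra].
Qed.

Lemma total_length_flat_map (f : nat -> list (R * R)) (l : list nat) (S : R) :
  (forall j, total_length (f j) = S) -> total_length (flat_map f l) = INR (length l) * S.
Proof.
  intro H. induction l; simpl; [ring|]. rewrite total_length_app, IHl, H.
  destruct (length l); simpl; ring.
Qed.

(* With [k = L0 + n]: if [k b] has no good denominator and [-n <= b < n + 1], then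
   [k b] lies in [bad_cover k] translated by one of the integers [j - k n], [j < k (2n+1)]. *)
Definition beta_cover (L0 n : nat) : list (R * R) :=
  flat_map (fun j => map (preimage_interval (INR j - INR (L0 + n) * INR n) (INR (L0 + n)))
                         (bad_cover (L0 + n)))
    (seq 0 ((L0 + n) * (2 * n + 1))).

Lemma beta_cover_nondegenerate (L0 n : nat) : (1 <= L0 + n)%nat -> nondegenerate (beta_cover L0 n).
Proof.
  intros Hk p Hp. unfold beta_cover in Hp. apply in_flat_map in Hp. destruct Hp as [j [_ Hj]].
  revert p Hj. apply nondegenerate_preimage.
  - apply INR_ge1 in Hk. lra.
  - apply unit_cover_correct; auto.
Qed.

Lemma beta_cover_length (L0 n : nat) :
  (1 <= L0 + n)%nat -> total_length (beta_cover L0 n) <= (1 / 2) ^ (L0 + n).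
Proof.
  intro Hk. pose proof (INR_ge1 _ Hk) as HkR. unfold beta_cover.
  rewrite (total_length_flat_map _ _ (total_length (bad_cover (L0 + n)) / INR (L0 + n))).
  2: { intro j. apply total_length_preimage. lra. }
  destruct (unit_cover_correct _ Hk) as [Hnd [Hlen _]]. fold (bad_cover (L0 + n)) in Hnd, Hlen.
  unfold unit_cover_budget in Hlen.
  pose proof (total_length_nonneg _ Hnd).
  rewrite length_seq, mult_INR, (plus_INR (2 * n) 1), mult_INR.
  assert (Hn : INR n <= INR (L0 + n)) by (apply le_INR; lia).
  set (k := INR (L0 + n)) in *. set (l := total_length (bad_cover (L0 + n))) in *.
  set (h := (1 / 2) ^ (L0 + n)) in *.
  replace (k * (INR 2 * INR n + INR 1) * (l / k)) with ((2 * INR n + 1) * l) by (simpl; field; lra).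
  replace h with ((2 * k + 1) * (h / (2 * k + 1))) by (field; lra).
  pose proof (pos_INR n).
  apply Rle_trans with ((2 * k + 1) * l); [apply Rmult_le_compat_r; lra|].
  apply Rmult_le_compat_l; lra.
Qed.

Lemma beta_cover_covers (L0 n : nat) (b : R) :
  (1 <= L0 + n)%nat -> - INR n <= b < INR n + 1 ->
  ~ good_denom (beta_tol (L0 + n)) (denom_bound (L0 + n)) (INR (L0 + n) * b) ->
  covers (beta_cover L0 n) b.
Proof.
  intros Hk Hb Hng.
  set (k := (L0 + n)%nat) in *. pose proof (INR_ge1 _ Hk) as HkR.
  set (z := Int_part (INR k * b)).
  destruct (base_Int_part (INR k * b)) as [Hz1 Hz2]. fold z in Hz1, Hz2.
  destruct (unit_cover_correct k Hk) as [_ [_ Hsp]].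
  destruct (Hsp (INR k * b - IZR z)) as [[p [Hp Hpx]]|Hg]; [lra| |].
  2: { exfalso. apply Hng. apply (good_denom_add_int _ _ _ (- z)). rewrite opp_IZR. exact Hg. }
  assert (Ek : INR k = IZR (Z.of_nat k)) by apply INR_IZR_INZ.
  assert (En : INR n = IZR (Z.of_nat n)) by apply INR_IZR_INZ.
  assert (Hlo : IZR (- (Z.of_nat k * Z.of_nat n) - 1) < IZR z).
  { rewrite minus_IZR, opp_IZR, mult_IZR, <- Ek, <- En. nra. }
  assert (Hhi : IZR z < IZR (Z.of_nat k * (Z.of_nat n + 1))).
  { rewrite mult_IZR, plus_IZR, <- Ek, <- En. nra. }
  apply lt_IZR in Hlo. apply lt_IZR in Hhi.
  set (j := Z.to_nat (z + Z.of_nat k * Z.of_nat n)).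
  assert (Ej : INR j - INR k * INR n = IZR z).
  { unfold j. rewrite INR_IZR_INZ, Z2Nat.id by lia. rewrite plus_IZR, mult_IZR, <- Ek, <- En. ring. }
  exists (preimage_interval (INR j - INR k * INR n) (INR k) p). split.
  - apply in_flat_map. exists j. split; [apply in_seq; unfold j; nia|]. apply in_map. auto.
  - rewrite Ej. unfold preimage_interval. simpl.
    split; apply (Rmult_lt_reg_r (INR k)); try lra;
      unfold Rdiv; rewrite Rmult_assoc, Rinv_l; lra.
Qed.

Lemma not_G_set_covered (L0 : nat) (x : R) :
  (1 <= L0)%nat -> ~ G_set x -> exists n, covers (beta_cover L0 n) x.
Proof.
  intros HL0 Hx.
  destruct (nat_gt (Rabs x)) as [n0 Hn0].
  assert (Hk : exists k, (L0 + n0 <= k)%nat /\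
                 ~ good_denom (beta_tol k) (denom_bound k) (INR k * x)).
  { apply NNPP. intro Hc. apply Hx. exists (L0 + n0)%nat. intros k H1 H2.
    apply NNPP. intro Hc'. apply Hc. exists k. auto. }
  destruct Hk as [k [Hkn Hbad]].
  exists (k - L0)%nat. replace k with (L0 + (k - L0))%nat in Hbad by lia.
  apply beta_cover_covers; [lia| |auto].
  assert (INR n0 <= INR (k - L0)) by (apply le_INR; lia).
  unfold Rabs in Hn0. destruct (Rcase_abs x); lra.
Qed.

Lemma geometric_half_le (m : nat) : sum_f_R0 (fun n => (1 / 2) ^ n) m <= 2.
Proof.
  pose proof (GP_finite (1 / 2) m). pose proof (pow_le (1 / 2) (m + 1) ltac:(lra)). lra.
Qed.

Lemma G_set_full_measure : full_measure G_set.
Proof.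
  intros eps Heps.
  destruct (pow_lt_1_zero (1 / 2) ltac:(rewrite Rabs_right; lra) (eps / 2) ltac:(lra))
    as [N HN].
  set (L0 := S N).
  assert (HL0 : (1 / 2) ^ L0 < eps / 2).
  { specialize (HN L0 ltac:(unfold L0; lia)).
    rewrite Rabs_right in HN; [auto|apply Rle_ge, pow_le; lra]. }
  apply (interval_sequence_of_lists (beta_cover L0)).
  - intro n. apply beta_cover_nondegenerate. unfold L0; lia.
  - intro m. apply Rle_trans with (sum_f_R0 (fun n => (1 / 2) ^ n * (1 / 2) ^ L0) m).
    + apply sum_Rle. intros n _. rewrite Rmult_comm, <- pow_add.
      apply beta_cover_length. unfold L0; lia.
    + rewrite <- scal_sum. pose proof (pow_le (1 / 2) L0 ltac:(lra)).
      apply Rle_trans with ((1 / 2) ^ L0 * 2); [|lra].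
      apply Rmult_le_compat_l, geometric_half_le; auto.
  - intros x Hx. apply not_G_set_covered; [unfold L0; lia|auto].
Qed.

Definition resonant_at (tol : nat -> R) (K : nat) (a : R) : Prop :=
  exists k, (K <= k)%nat /\ (1 <= k)%nat /\ tnorm (INR k * a) < tol k.

Definition infinitely_resonant (tol : nat -> R) (a : R) : Prop :=
  forall K, resonant_at tol K a.

Lemma resonant_at_open (tol : nat -> R) (K : nat) : is_open (resonant_at tol K).
Proof.
  intros x [k [H1 [H2 H3]]]. pose proof (INR_ge1 _ H2) as HkR.
  exists ((tol k - tnorm (INR k * x)) / INR k). split; [apply Rdiv_lt_0_compat; lra|].
  intros y Hy. exists k. split; [auto|split; [auto|]].
  pose proof (tnorm_lipschitz (INR k * y) (INR k * x)) as Hl.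
  replace (INR k * y - INR k * x) with (INR k * (y - x)) in Hl by ring.
  rewrite Rabs_mult, (Rabs_right (INR k)) in Hl by lra.
  apply (Rmult_lt_compat_l (INR k)) in Hy; [|lra].
  replace (INR k * ((tol k - tnorm (INR k * x)) / INR k)) with (tol k - tnorm (INR k * x)) in Hy
    by (field; lra).
  lra.
Qed.

(* Rationals [z / k] with [k] arbitrarily large are resonant and [1/k]-dense. *)
Lemma resonant_at_dense (tol : nat -> R) (K : nat) :
  (forall k, (1 <= k)%nat -> 0 < tol k) -> is_dense (resonant_at tol K).
Proof.
  intros Htol x d Hd.
  destruct (nat_gt (1 / d)) as [m Hm].
  set (k := S (Nat.max K m)).
  assert (Hk1 : (1 <= k)%nat) by (unfold k; lia).
  pose proof (INR_ge1 _ Hk1) as HkR.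
  assert (Hkm : INR m <= INR k) by (apply le_INR; unfold k; lia).
  set (z := Int_part (INR k * x)).
  destruct (base_Int_part (INR k * x)) as [Hz1 Hz2]. fold z in Hz1, Hz2.
  exists (IZR z / INR k). split.
  - exists k. split; [unfold k; lia|split; auto].
    replace (INR k * (IZR z / INR k)) with (IZR z) by (field; lra).
    rewrite tnorm_int. auto.
  - replace (IZR z / INR k - x) with ((IZR z - INR k * x) / INR k) by (field; lra).
    unfold Rdiv. rewrite Rabs_mult, Rabs_inv, (Rabs_right (INR k)) by lra.
    assert (Rabs (IZR z - INR k * x) < 1) by (unfold Rabs; destruct Rcase_abs; lra).
    assert (Hk : 1 / INR k < d) by (apply one_div_lt_swap; lra).
    unfold Rdiv in Hk. rewrite Rmult_1_l in Hk. pose proof (Rinv_0_lt_compat (INR k) ltac:(lra)).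
    nra.
Qed.

Lemma infinitely_resonant_residual (tol : nat -> R) :
  (forall k, (1 <= k)%nat -> 0 < tol k) -> residual (infinitely_resonant tol).
Proof.
  intro Htol. exists (resonant_at tol). split; [|split].
  - apply resonant_at_open.
  - intro K. apply resonant_at_dense; auto.
  - auto.
Qed.

Lemma infinitely_resonant_periodic (tol : nat -> R) : periodic (infinitely_resonant tol).
Proof.
  intro x. split; intros H K; destruct (H K) as [k [H1 [H2 H3]]]; exists k;
    (split; [auto|split; [auto|]]).
  - rewrite (mul_nat_add_int x k 1), tnorm_add_int. auto.
  - rewrite (mul_nat_add_int x k 1), tnorm_add_int in H3. auto.
Qed.

Definition alpha_tol (k M : nat) : R := 1 / (14 * INR k ^ 5 * (INR M + 1) ^ 3).

Lemma alpha_tol_pos (k M : nat) : (1 <= k)%nat -> 0 < alpha_tol k M.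
Proof.
  intro Hk. apply INR_ge1 in Hk. pose proof (pos_INR M).
  apply Rdiv_lt_0_compat; [lra|].
  repeat apply Rmult_lt_0_compat; try apply pow_lt; lra.
Qed.

Definition P0_set : R -> Prop :=
  infinitely_resonant (fun k => alpha_tol k (denom_bound k)).

Lemma cubic_seq_diff (a b : R) (n k s : nat) :
  cubic_seq a b n - cubic_seq a b (n + k * s) =
  - (INR (s * (3 * n * n + 3 * n * (k * s) + (k * s) * (k * s))) * (INR k * a)
     + INR (2 * n + k * s) * (INR s * (INR k * b))).
Proof. unfold cubic_seq. repeat rewrite ?plus_INR, ?mult_INR. simpl. ring. Qed.

Lemma alpha_term_le (k s M n : nat) (t : R) :
  (1 <= k)%nat -> (1 <= s <= M)%nat -> (n <= k * (k * s))%nat ->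
  0 <= t -> t <= alpha_tol k M ->
  INR (s * (3 * n * n + 3 * n * (k * s) + (k * s) * (k * s))) * t <= 1 / (2 * INR k).
Proof.
  intros Hk Hs Hn Ht0 Ht.
  assert (Hnat : (s * (3 * n * n + 3 * n * (k * s) + (k * s) * (k * s))
                  <= 7 * k ^ 4 * ((M + 1) * (M + 1) * (M + 1)))%nat).
  { set (q := (k * s)%nat).
    assert (Hkk : (1 <= k * k)%nat) by nia.
    assert (Hn2 : (n * n <= k * k * (q * q))%nat) by nia.
    assert (Hnq : (n * q <= k * k * (q * q))%nat) by nia.
    assert (Hq2 : (q * q <= k * k * (q * q))%nat) by nia.
    assert (Hs3 : (s * s * s <= (M + 1) * (M + 1) * (M + 1))%nat)
      by (repeat apply Nat.mul_le_mono; lia).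
    apply Nat.le_trans with (s * (7 * (k * k) * (q * q)))%nat;
      [apply Nat.mul_le_mono_l; lia|].
    replace (s * (7 * (k * k) * (q * q)))%nat with (7 * k ^ 4 * (s * s * s))%nat
      by (unfold q; simpl; ring).
    apply Nat.mul_le_mono_l. auto. }
  set (N := (s * (3 * n * n + 3 * n * (k * s) + (k * s) * (k * s)))%nat) in *.
  apply le_INR in Hnat.
  replace (INR (7 * k ^ 4 * ((M + 1) * (M + 1) * (M + 1))))
    with (7 * INR k ^ 4 * (INR M + 1) ^ 3) in Hnat
    by (rewrite !mult_INR, pow_INR, plus_INR; simpl; ring).
  pose proof (INR_ge1 _ Hk) as HkR. pose proof (pos_INR M). pose proof (pos_INR N).
  unfold alpha_tol in Ht.
  apply Rle_trans with (7 * INR k ^ 4 * (INR M + 1) ^ 3 * (1 / (14 * INR k ^ 5 * (INR M + 1) ^ 3))).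
  - apply Rmult_le_compat; auto.
  - right. field. lra.
Qed.

Lemma beta_term_lt (k s n : nat) (t : R) :
  (1 <= k)%nat -> (1 <= s)%nat -> (n <= k * (k * s))%nat ->
  0 <= t -> INR s * t < beta_tol k -> INR (2 * n + k * s) * t < 1 / (2 * INR k).
Proof.
  intros Hk Hs Hn Ht0 Ht.
  assert (Hnat : (2 * n + k * s <= 3 * (k * k) * s)%nat) by nia.
  apply le_INR in Hnat. rewrite !mult_INR in Hnat. simpl (INR 3) in Hnat.
  pose proof (INR_ge1 _ Hk) as HkR.
  unfold beta_tol in Ht.
  apply Rle_lt_trans with (3 * (INR k * INR k) * (INR s * t)).
  - rewrite <- Rmult_assoc. apply Rmult_le_compat_r; [auto|lra].
  - replace (1 / (2 * INR k)) with (3 * (INR k * INR k) * (1 / (6 * INR k ^ 3))) by (field; lra).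
    apply Rmult_lt_compat_l; auto. nra.
Qed.

Lemma cubic_seq_repeats (a b : R) (k s M n : nat) :
  (1 <= k)%nat -> (1 <= s <= M)%nat -> (n <= k * (k * s))%nat ->
  tnorm (INR k * a) < alpha_tol k M ->
  INR s * tnorm (INR s * (INR k * b)) < beta_tol k ->
  tdist (cubic_seq a b n) (cubic_seq a b (n + k * s)) < 1 / INR k.
Proof.
  intros Hk Hs Hn Ha Hb.
  unfold tdist. rewrite cubic_seq_diff, tnorm_opp.
  eapply Rle_lt_trans; [apply tnorm_add|].
  eapply Rle_lt_trans; [apply Rplus_le_compat; apply tnorm_mul_nat|].
  pose proof (alpha_term_le k s M n _ Hk Hs Hn (tnorm_ge0 _) (Rlt_le _ _ Ha)).
  pose proof (beta_term_lt k s n _ Hk ltac:(lia) Hn (tnorm_ge0 _) Hb).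
  pose proof (INR_ge1 _ Hk).
  replace (1 / INR k) with (1 / (2 * INR k) + 1 / (2 * INR k)) by (field; lra).
  lra.
Qed.

Theorem theorem3p6 :
  exists P0 G : R -> Prop,
    periodic P0 /\ residual P0 /\
    periodic G /\ full_measure G /\
    forall alpha beta : R, P0 alpha -> G beta ->
      repetition_property (cubic_seq alpha beta).
Proof.
  exists P0_set, G_set. split; [apply infinitely_resonant_periodic|].
  split; [apply infinitely_resonant_residual; intros; apply alpha_tol_pos; auto|].
  split; [apply G_set_periodic|]. split; [apply G_set_full_measure|].
  intros a b Ha [K HK] eps Heps r Hr.
  destruct (nat_gt (1 / eps)) as [m Hm].
  destruct (Ha (Nat.max K (Nat.max r m))) as [k [HkK [Hk Hres]]].
  destruct (HK k ltac:(lia) Hk) as [s [Hs Hgood]].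
  exists (k * s)%nat. split; [nia|]. intros n Hn.
  apply Rlt_le_trans with (1 / INR k).
  - apply (cubic_seq_repeats a b k s (denom_bound k)); auto. nia.
  - assert (INR m <= INR k) by (apply le_INR; lia).
    left. apply one_div_lt_swap; lra.
Qed.
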